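(* Let $k\geq 3$ be an integer and $\ell\geq 2$ an even integer, and let $G_1^{\{\ell,k\}}$ and $G_2^{\{\ell,k\}}$ be the indistinguishability graphs (for a fixed permutation $\sigma\neq\mathrm{id}$ of $[k]$), with vertices labeled by their names as defined below. Then for every $i\in[k]$ and every $v\in\{(i,1),(i,\ell)\}$, $$N^{3(\ell/2-1)}_{G_1^{\{\ell,k\}}}[v]=N^{3(\ell/2-1)}_{G_2^{\{\ell,k\}}}[v],$$ i.e. the subgraphs induced by the vertices at distance at most $3(\ell/2-1)$ from $v$ coincide (as labeled graphs) in the two graphs.
   Context: Let $[m]=\{1,\dots,m\}$. For a graph $H$, vertex $v$ and $t\geq 0$, $N^t_H[v]$ denotes the subgraph of $H$ induced by $\{u\in V(H):\mathrm{dist}_H(u,v)\leq t\}$. Path of cliques: for permutations $\tau_1,\dots,\tau_{\ell-1}$ of $[k]$, $P(\tau_1,\dots,\tau_{\ell-1})$ has vertex set $[k]\times[\ell]$ and edges $\{(a,i),(b,i)\}$ for $a\neq b$, $i\in[\ell]$, and $\{(a,i),(b,i+1)\}$ for $i\in[\ell-1]$, $a,b\in[k]$, $b\neq\tau_i(a)$. The $k$-edge-gadget transformation: given a graph $G$ and for each edge a chosen ordered pair $(u,v)$, keep all vertices of $G$, delete each edge $\{u,v\}$, and add $k$ new vertices named $(u,v,1),\dots,(u,v,k)$ forming a clique together with edges $\{u,(u,v,j)\}$ for $j=1,\dots,k-1$ and $\{v,(u,v,k)\}$. Indistinguishability graphs: let $G_1=P(\tau_1,\dots,\tau_{\ell-1})$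 with all $\tau_i=\mathrm{id}$, and $G_2=P(\tau_1',\dots,\tau_{\ell-1}')$ with $\tau_i'=\mathrm{id}$ for $i\neq \ell/2$ and $\tau'_{\ell/2}=\sigma$, where $\sigma$ is a fixed permutation of $[k]$ different from the identity. $G_1^{\{\ell,k\}}$ (resp. $G_2^{\{\ell,k\}}$) is obtained from $G_1$ (resp. $G_2$) by the $k$-edge-gadget transformation, where an edge $\{(a,i),(b,i)\}$ with $a<b$ is oriented as $((a,i),(b,i))$ and an edge $\{(a,i),(b,i+1)\}$ is oriented as $((a,i),(b,i+1))$; vertices are labeled by these names ($(a,i)$ for original vertices, $(u,v,j)$ for gadget vertices). *)

From mathcomp Require Import all_boot all_fingroup.
Set Implicit Arguments. Unset Strict Implicit. Unset Printing Implicit Defensive.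

(* Vertex names: Orig a i is the original vertex (a,i);
   Gad a i b j m is the gadget vertex ((a,i),(b,j),m). *)
Inductive vtx : Type :=
  | Orig of nat & nat
  | Gad of nat & nat & nat & nat & nat.

Record graph := Graph { vert : vtx -> Prop ; adj : vtx -> vtx -> Prop }.

Inductive walk (G : graph) : nat -> vtx -> vtx -> Prop :=
  | walk0 v : vert G v -> walk G 0 v v
  | walkS n v u w : walk G n v u -> adj G u w -> vert G w -> walk G n.+1 v w.

Definition in_ball (G : graph) (t : nat) (v u : vtx) : Prop :=
  exists2 n, n <= t & walk G n v u.

Definition ball_eq (G1 G2 : graph) (t : nat) (v : vtx) : Prop :=
  (forall u, in_ball G1 t v u <-> in_ball G2 t v u) /\
  (forall u w, in_ball G1 t v u -> in_ball G1 t v w -> (adj G1 u w <-> adj G2 u w)).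

Definition pc_vert (k l : nat) (a i : nat) : Prop :=
  0 < a <= k /\ 0 < i <= l.

(* Oriented edges ((a,i),(b,j)) of P(tau_1,...,tau_{l-1}); tau i is tau_i on [k] *)
Definition pc_oedge (k l : nat) (tau : nat -> nat -> nat) (a i b j : nat) : Prop :=
  pc_vert k l a i /\ pc_vert k l b j /\
  ((j = i /\ a < b) \/ (j = i.+1 /\ b <> tau i a)).

Definition gad_vert (k l : nat) (tau : nat -> nat -> nat) (x : vtx) : Prop :=
  match x with
  | Orig a i => pc_vert k l a i
  | Gad a i b j m => pc_oedge k l tau a i b j /\ 0 < m <= k
  end.

Definition gad_adj0 (k l : nat) (tau : nat -> nat -> nat) (x y : vtx) : Prop :=
  match x, y with
  | Gad a i b j m, Gad a' i' b' j' m' =>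
      a' = a /\ i' = i /\ b' = b /\ j' = j /\ m <> m'
  | Orig c p, Gad a i b j m =>
      (c = a /\ p = i /\ 0 < m <= k.-1) \/ (c = b /\ p = j /\ m = k)
  | _, _ => False
  end.

Definition gadget_graph (k l : nat) (tau : nat -> nat -> nat) : graph :=
  Graph (gad_vert k l tau)
    (fun x y => gad_vert k l tau x /\ gad_vert k l tau y /\
                (gad_adj0 k l tau x y \/ gad_adj0 k l tau y x)).

(* a permutation of 'I_k viewed as a permutation of [k] = {1..k} *)
Definition perm_nat (k : nat) (s : {perm 'I_k}) (a : nat) : nat :=
  match @insub nat (fun x => x < k) 'I_k a.-1 with
  | Some x => (val (s x)).+1
  | None => a
  end.

Definition tau_id : nat -> nat -> nat := fun _ a => a.

Definition tau_sigma (k l : nat) (s : {perm 'I_k}) : nat -> nat -> nat :=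
  fun i a => if i == l./2 then perm_nat s a else a.

Definition G1 (k l : nat) : graph := gadget_graph k l tau_id.
Definition G2 (k l : nat) (s : {perm 'I_k}) : graph := gadget_graph k l (tau_sigma l s).

(* Give an original vertex of column i the level 3i, and a gadget vertex on
   an edge leaving column i the level 3i+2 if it is the gadget vertex attached
   to column i+1, and 3i+1 otherwise.  Adjacent vertices have levels differing
   by at most one, so the ball of radius t around v only involves vertices
   whose level is within t of that of v.  The two graphs differ only in which
   gadget vertices exist between the columns l/2 and l/2+1; these have levels
   3(l/2)+1 and 3(l/2)+2, more than 3(l/2-1) away from the levels 3 and 3l of
   the columns 1 and l. *)
From mathcomp Require Import all_boot all_fingroup.
From mathcomp Require Import zify.

Set Implicit Arguments.
Unset Strict Implicit.
Unset Printing Implicit Defensive.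

Section WalkAgree.

Variables (G H : graph) (t : nat) (v : vtx) (S : vtx -> Prop).

Hypothesis vert_agree : forall x, S x -> (vert G x <-> vert H x).
Hypothesis adj_agree : forall x y, S x -> S y -> (adj G x y <-> adj H x y).
Hypothesis ball_sub : forall u, in_ball G t v u -> S u.

Lemma walk_agree n u : walk G n v u -> n <= t -> walk H n v u.
Proof.
move Ev: v => x W; elim: W Ev => [y Gy|m y u' w W IH Gu'w Gw] Ev lemt; subst y.
  have Sv : S v by apply: ball_sub; exists 0 => //; apply: walk0.
  by apply: walk0; apply/vert_agree.
have Su' : S u' by apply: ball_sub; exists m; [exact: ltnW | done].
have Sw : S w by apply: ball_sub; exists m.+1 => //; apply: walkS W Gu'w Gw.
apply: walkS (IH erefl (ltnW lemt)) _ _; first exact/adj_agree.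
exact/vert_agree.
Qed.

End WalkAgree.

Lemma ball_eq_of_agree (G H : graph) t v (S : vtx -> Prop) :
  (forall x, S x -> (vert G x <-> vert H x)) ->
  (forall x y, S x -> S y -> (adj G x y <-> adj H x y)) ->
  (forall u, in_ball G t v u -> S u) -> (forall u, in_ball H t v u -> S u) ->
  ball_eq G H t v.
Proof.
move=> vert_agree adj_agree ballG_S ballH_S.
split=> [u|u w /ballG_S Su /ballG_S Sw]; last exact: adj_agree.
split=> -[n lent W]; exists n => //; apply: (walk_agree (S := S)) W lent => //.
- by move=> x Sx; apply: iff_sym; auto.
- by move=> x y Sx Sy; apply: iff_sym; auto.
Qed.

Definition level (k : nat) (x : vtx) : nat :=
  match x with
  | Orig _ i => 3 * i
  | Gad _ i _ j m => if (j == i.+1) && (m == k) then 3 * i + 2 else 3 * i + 1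
  end.

Definition near_level (k t : nat) (x y : vtx) : Prop :=
  level k x <= level k y + t /\ level k y <= level k x + t.

Lemma near_level_sym k t x y : near_level k t x y -> near_level k t y x.
Proof. by case. Qed.

Lemma near_level_trans k s t x y z :
  near_level k s x y -> near_level k t y z -> near_level k (s + t) x z.
Proof. rewrite /near_level; lia. Qed.

Lemma near_level_le k s t x y : s <= t -> near_level k s x y -> near_level k t x y.
Proof. rewrite /near_level; lia. Qed.

Lemma gad_adj0_level k l tau x y :
  gad_vert k l tau x -> gad_vert k l tau y -> gad_adj0 k l tau x y ->
  near_level k 1 x y.
Proof.
rewrite /near_level.
case: x => [c p|a i b j m]; case: y => [c' p'|a' i' b' j' m'] //=.
- rewrite /pc_oedge => _ [[_ [_ Hj]] Hm] [[? [? Hm']] | [? [? ?]]];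
    case: Hj => -[? _]; subst; case: ifP; lia.
- by move=> _ _ [? [? [? [? _]]]]; subst; do 2 case: ifP; lia.
Qed.

Lemma gadget_adj_level k l tau x y :
  adj (gadget_graph k l tau) x y -> near_level k 1 x y.
Proof.
case=> Gx [Gy [xy | yx]]; first exact: gad_adj0_level xy.
exact/near_level_sym/(gad_adj0_level Gy Gx yx).
Qed.

Lemma gadget_walk_level k l tau n x y :
  walk (gadget_graph k l tau) n x y -> near_level k n x y.
Proof.
elim=> [z _|m z y' w _ IH y'w _]; first by rewrite /near_level addn0.
by rewrite -addn1; apply: near_level_trans IH (gadget_adj_level y'w).
Qed.

Lemma gadget_in_ball_level k l tau t v u :
  in_ball (gadget_graph k l tau) t v u -> near_level k t v u.
Proof. by case=> n lent /gadget_walk_level; apply: near_level_le. Qed.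

Lemma gadget_ball_eq k l tau1 tau2 t v :
  (forall x, near_level k t v x -> (gad_vert k l tau1 x <-> gad_vert k l tau2 x)) ->
  ball_eq (gadget_graph k l tau1) (gadget_graph k l tau2) t v.
Proof.
move=> vert_agree.
apply: (ball_eq_of_agree (S := near_level k t v)) => //
  [x y /vert_agree x12 /vert_agree y12 | u | u].
- by rewrite /= x12 y12.
- exact: gadget_in_ball_level.
- exact: gadget_in_ball_level.
Qed.

Lemma gad_vert_tau_eq k l tau1 tau2 c x :
  (forall i, i != c -> tau1 i =1 tau2 i) ->
  (forall a b m, x <> Gad a c b c.+1 m) ->
  gad_vert k l tau1 x <-> gad_vert k l tau2 x.
Proof.
case: x => [//|a i b j m] tau12 not_crossing /=; rewrite /pc_oedge.
have [ic | /tau12 -> //] := eqVneq i c.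
have [jc | /eqP Nj] := eqVneq j c.+1; last by rewrite ic; tauto.
by case: (not_crossing a b m); rewrite ic jc.
Qed.

Lemma end_column_far_from_crossing k l i v a b m :
  2 <= l -> ~~ odd l -> (v = Orig i 1 \/ v = Orig i l) ->
  ~ near_level k (3 * (l./2 - 1)) v (Gad a l./2 b l./2.+1 m).
Proof.
move=> l_ge2 l_even v_end; have := odd_double_half l.
rewrite (negbTE l_even) -muln2 /near_level /= eqxx /= => l_half.
by case: v_end => -> /=; case: (m == k) => /=; lia.
Qed.

Theorem fact2 (k l : nat) (s : {perm 'I_k}) :
  3 <= k -> 2 <= l -> ~~ odd l -> s != 1%g ->
  forall i v, 0 < i <= k -> (v = Orig i 1 \/ v = Orig i l) ->
    ball_eq (G1 k l) (G2 l s) (3 * (l./2 - 1)) v.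
Proof.
move=> _ l_ge2 l_even _ i v _ v_end.
apply: gadget_ball_eq => x near_vx.
apply: (@gad_vert_tau_eq _ _ _ _ l./2) => [j /negbTE j_mid a | a b m x_mid].
  by rewrite /tau_sigma j_mid.
by move: near_vx; rewrite x_mid; apply: end_column_far_from_crossing v_end.
Qed.
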